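(* Let $P$ be an instance of $k$-means clustering with $z$ outliers, let $S$ be a finite multiset of points of $P$, let $k'\ge0$ be such that $|S\setminus P_{opt}|\le k'$, and let $H$ be a set of $k+k'$ centers in $\mathbb{R}^D$ with $Cost(S,H)\le c\cdot W$ for some $c\ge1$, where $W$ is the minimum of $Cost(S,H')$ over all sets $H'$ of $k+k'$ points in $\mathbb{R}^D$. Let $S_{opt}=S\cap P_{opt}$. Then $Cost(\tilde S_{opt},H)\le(2+2c)\,Cost(S_{opt},O^* )$.
   Context: $P\subset\mathbb{R}^D$, $|P|=n$, $0<z<n$. $dist(p,H)=\min_{q\in H}\|p-q\|$; $Cost(X,Y)=\sum_{q\in X}dist(q,Y)^2$ (with multiplicity). $P_{opt}\subset P$ with $|P_{opt}|=n-z$ is the set of inliers of an optimal solution of $k$-means with $z$ outliers, $C^*_1,\dots,C^*_k$ the optimal clusters forming $P_{opt}$, $o^*_j$ the mean of $C^*_j$, $O^*=\{o^*_1,\dots,o^*_k\}$. Star shaped transformation: for $p\in C^*_j$, $\tilde p=o^*_j$; for $U\subseteq P_{opt}$ (multiset), $\tilde U$ is the multiset $\{\tilde p:p\in U\}$. *)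

From HB Require Import structures.
From mathcomp Require Import all_boot all_order all_algebra.
From mathcomp Require Import reals.
Set Implicit Arguments. Unset Strict Implicit. Unset Printing Implicit Defensive.
Import Order.TTheory GRing.Theory Num.Theory.
Local Open Scope ring_scope.

Section Defs.
Variables (R : realType) (D : nat).
Notation V := 'rV[R]_D.

Definition sqdist (p q : V) : R := \sum_(i < D) (p ord0 i - q ord0 i) ^+ 2.

(* dist(p,H)^2 = min_{q in H} ||p - q||^2, for a finite (nonempty) set H
   given as a sequence; (0 by convention if H is empty, never used below) *)
Definition dist2 (p : V) (H : seq V) : R :=
  \big[Num.min/(if H is h :: _ then sqdist p h else 0)]_(q <- H) sqdist p q.

Definition Cost (X Y : seq V) : R := \sum_(q <- X) dist2 q Y.

Definition cluster (k : nat) (Q : seq V) (f : V -> 'I_k) (j : 'I_k) : seq V :=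
  [seq p <- Q | f p == j].

Definition mean (X : seq V) : V := (size X)%:R^-1 *: \sum_(p <- X) p.

Definition centers (k : nat) (c : 'I_k -> V) : seq V := [seq c j | j <- enum 'I_k].

Definition opt_kmeans_outliers (k z : nat) (P Popt : seq V) (c : 'I_k -> V) :=
  [/\ uniq Popt, {subset Popt <= P}, size Popt = (size P - z)%N &
      forall (Q : seq V) (c' : 'I_k -> V),
        uniq Q -> {subset Q <= P} -> size Q = (size P - z)%N ->
        Cost Popt (centers c) <= Cost Q (centers c')].

(* f assigns each inlier to a nearest optimal center (clusters C*_j) *)
Definition voronoi (k : nat) (Popt : seq V) (c : 'I_k -> V) (f : V -> 'I_k) :=
  forall p, p \in Popt -> sqdist p (c (f p)) = dist2 p (centers c).

Definition Ostar (k : nat) (Popt : seq V) (f : V -> 'I_k) : seq V :=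
  [seq mean (cluster Popt f j) | j <- enum 'I_k & cluster Popt f j != [::]].

Definition star (k : nat) (Popt : seq V) (f : V -> 'I_k) (p : V) : V :=
  mean (cluster Popt f (f p)).

End Defs.

From HB Require Import structures.
From mathcomp Require Import all_boot all_order all_algebra.
From mathcomp Require Import reals.
From mathcomp Require Import ring lra.
Import Order.TTheory GRing.Theory Num.Theory.
Local Open Scope ring_scope.

(* The optimal centers are the means of their clusters: otherwise replacing a
   center by the mean of its cluster would lower the optimal cost.  Hence each
   star point [star p] is a nearest point of [Ostar] to [p], and [Ostar] has at
   most [k] points.  The relaxed triangle inequality
   [dist(star p, H)^2 <= 2 |star p - p|^2 + 2 dist(p, H)^2] gives
   [Cost (star Sopt) H <= 2 Cost Sopt Ostar + 2 Cost Sopt H].  Finally [Ostar]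
   together with the at most [k'] outliers of [S] extends to [k + k'] centers
   [H'] with [Cost S H' <= Cost Sopt Ostar], so that
   [Cost Sopt H <= Cost S H <= c Cost S H' <= c Cost Sopt Ostar]. *)

Lemma uniq_extend {T : eqType} (A H : seq T) :
  uniq H -> (size (undup A) <= size H)%N ->
  exists H', [/\ uniq H', size H' = size H & {subset A <= H'}].
Proof.
move=> uH szA; set U := undup A; set F := [seq h <- H | h \notin U].
exists (U ++ take (size H - size U) F); split.
- rewrite cat_uniq undup_uniq take_uniq ?filter_uniq //= andbT.
  by apply/hasPn => x /mem_take; rewrite mem_filter => /andP[].
- have szF : (size H - size U <= size F)%N.
    have HU : (count (mem U) H <= size U)%N.
      rewrite -size_filter uniq_leq_size ?filter_uniq // => x.
      by rewrite mem_filter => /andP[].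
    rewrite size_filter -(count_predC (mem U) H) in HU *.
    by rewrite leq_subLR leq_add2r.
  by rewrite size_cat size_takel // subnKC.
- by move=> x xA; rewrite mem_cat mem_undup xA.
Qed.

Section SquaredDistance.
Context {R : realType} {D : nat}.
Implicit Types (p q a : 'rV[R]_D) (H X Y : seq 'rV[R]_D).

Lemma sqdist_ge0 p q : 0 <= sqdist p q.
Proof. by apply: sumr_ge0 => i _; apply: sqr_ge0. Qed.

Lemma sqdistC p q : sqdist p q = sqdist q p.
Proof. by apply: eq_bigr => i _; rewrite -sqrrN opprB. Qed.

Lemma sqdistxx p : sqdist p p = 0.
Proof. by apply: big1 => i _; rewrite subrr expr0n. Qed.

Lemma sqdist_eq0 p q : (sqdist p q == 0) = (p == q).
Proof.
apply/idP/eqP => [|->]; last by rewrite sqdistxx.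
rewrite psumr_eq0 => [/allP pq|i _]; last exact: sqr_ge0.
apply/rowP => i; move: (pq i (mem_index_enum _)).
by rewrite sqrf_eq0 subr_eq0 => /eqP.
Qed.

Lemma sqdist_le_sqdistD p q a : sqdist p q <= 2 * sqdist p a + 2 * sqdist a q.
Proof.
rewrite /sqdist !mulr_sumr -big_split /=; apply: ler_sum => i _.
have := sqr_ge0 ((p ord0 i - a ord0 i) - (a ord0 i - q ord0 i)); nra.
Qed.

Lemma dist2_le p {H q} : q \in H -> dist2 p H <= sqdist p q.
Proof. by move=> qH; apply: ge_bigmin_seq. Qed.

Lemma dist2_attained p H :
  H != [::] -> exists2 q, q \in H & dist2 p H = sqdist p q.
Proof.
case: H => [//|h H] _; rewrite /dist2 big_seq.
elim/big_ind: _ => [|_ _ [x xH ->] [y yH ->]|q qH]; last by exists q.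
- by exists h; rewrite ?mem_head.
- by rewrite /Num.min; case: ifP => _; [exists x | exists y].
Qed.

Lemma dist2_ge0 p H : 0 <= dist2 p H.
Proof.
have [->|/(dist2_attained p)[q _ ->]] := eqVneq H [::]; last exact: sqdist_ge0.
by rewrite /dist2 big_nil.
Qed.

Lemma dist2_mem p H : p \in H -> dist2 p H = 0.
Proof.
by move=> pH; apply/le_anti; rewrite dist2_ge0 -(sqdistxx p) dist2_le.
Qed.

Lemma dist2_subset p Y Y' :
  Y != [::] -> {subset Y <= Y'} -> dist2 p Y' <= dist2 p Y.
Proof. by move=> /(dist2_attained p)[q qY ->] YY'; apply/dist2_le/YY'. Qed.

Lemma dist2_le_sqdistD a p H : dist2 a H <= 2 * sqdist a p + 2 * dist2 p H.
Proof.
have [->|/(dist2_attained p)[q qH ->]] := eqVneq H [::].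
  by rewrite /dist2 !big_nil mulr0 addr0 mulr_ge0 ?sqdist_ge0.
exact: le_trans (dist2_le a qH) (sqdist_le_sqdistD a q p).
Qed.

Lemma Cost_ge0 X Y : 0 <= Cost X Y.
Proof. by apply: sumr_ge0 => p _; apply: dist2_ge0. Qed.

Lemma Cost_filterC (r : pred 'rV[R]_D) X Y :
  Cost X Y = Cost [seq p <- X | r p] Y + Cost [seq p <- X | ~~ r p] Y.
Proof. by rewrite /Cost !big_filter [LHS](bigID r). Qed.

Lemma Cost_filter_le (r : pred 'rV[R]_D) X Y :
  Cost [seq p <- X | r p] Y <= Cost X Y.
Proof. by rewrite [leRHS](Cost_filterC r) lerDl Cost_ge0. Qed.

Lemma Cost_eq0 X Y : {subset X <= Y} -> Cost X Y = 0.
Proof. by move=> XY; rewrite /Cost big_seq big1 // => p /XY/dist2_mem. Qed.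

Lemma Cost_subset X Y Y' :
  Y != [::] -> {subset Y <= Y'} -> Cost X Y' <= Cost X Y.
Proof. by move=> Y0 YY'; apply: ler_sum => p _; apply: dist2_subset. Qed.

End SquaredDistance.

Section Means.
Context {R : realType} {D : nat}.
Implicit Types (y : 'rV[R]_D) (X : seq 'rV[R]_D).

Lemma sum_sqdist_mean X y : X != [::] ->
  \sum_(x <- X) sqdist x y =
  \sum_(x <- X) sqdist x (mean X) + (size X)%:R * sqdist (mean X) y.
Proof.
move=> X0; rewrite /sqdist exchange_big [X in X + _]exchange_big /=.
rewrite mulr_sumr -big_split /=; apply: eq_bigr => i _.
have n0 : (size X)%:R != 0 :> R by rewrite pnatr_eq0 size_eq0.
have mE : mean X ord0 i = (size X)%:R^-1 * \sum_(x <- X) x ord0 i.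
  by rewrite /mean mxE summxE.
move: (mean X ord0 i) (y ord0 i) mE => m yi mE.
have centered : \sum_(x <- X) (x ord0 i - m) = 0.
  by rewrite sumrB big_const_seq count_predT iter_addr_0 mE; field.
have sq_split (x : R) :
    (x - yi) ^+ 2 = (x - m) ^+ 2 + 2 * (m - yi) * (x - m) + (m - yi) ^+ 2.
  by ring.
under eq_bigr do rewrite sq_split.
by rewrite !big_split /= -mulr_sumr centered mulr0 addr0 big_const_seq
  count_predT iter_addr_0 mulr_natl.
Qed.

Lemma sum_sqdist_mean_lt X y : X != [::] -> y != mean X ->
  \sum_(x <- X) sqdist x (mean X) < \sum_(x <- X) sqdist x y.
Proof.
move=> X0 ym; rewrite [ltRHS]sum_sqdist_mean // ltrDl.
rewrite mulr_gt0 ?ltr0n ?lt0n ?size_eq0 //.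
by rewrite lt_def sqdist_eq0 eq_sym ym sqdist_ge0.
Qed.

End Means.

Section Clusters.
Context {R : realType} {D k : nat}.
Implicit Types (Q : seq 'rV[R]_D) (c : 'I_k -> 'rV[R]_D) (f : 'rV[R]_D -> 'I_k).

Lemma Cost_le_assignment Q c f :
  Cost Q (centers c) <= \sum_(q <- Q) sqdist q (c (f q)).
Proof. by apply: ler_sum => q _; apply/dist2_le/map_f; rewrite mem_enum. Qed.

Lemma sum_cluster Q f j (F : 'rV[R]_D -> 'I_k -> R) :
  \sum_(q <- Q) F q (f q) =
  \sum_(q <- cluster Q f j) F q j + \sum_(q <- Q | f q != j) F q (f q).
Proof.
rewrite (bigID (fun q => f q == j)) big_filter /=; congr (_ + _).
by apply: eq_bigr => q /eqP ->.
Qed.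

Lemma mem_cluster Q f j p : (p \in cluster Q f j) = (f p == j) && (p \in Q).
Proof. exact: mem_filter. Qed.

Lemma star_mem_Ostar {Q} f {p} : p \in Q -> star Q f p \in Ostar Q f.
Proof.
move=> pQ; apply: (map_f (fun j => mean (cluster Q f j))).
rewrite mem_filter mem_enum andbT; apply/eqP => cl0.
have : p \in cluster Q f (f p) by rewrite mem_cluster eqxx.
by rewrite cl0.
Qed.

Lemma Ostar_neq0 Q f : Q != [::] -> Ostar Q f != [::].
Proof.
case: Q => [//|p Q] _; apply/eqP => O0.
by have := star_mem_Ostar f (mem_head p Q); rewrite O0.
Qed.

Lemma size_Ostar Q f : (size (Ostar Q f) <= k)%N.
Proof.
by rewrite size_map size_filter (leq_trans (count_size _ _)) ?size_enum_ord.
Qed.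

End Clusters.

Section OptimalSolution.
Context {R : realType} {D k z : nat} {P Popt : seq 'rV[R]_D}.
Context {c0 : 'I_k -> 'rV[R]_D} {f : 'rV[R]_D -> 'I_k}.
Hypotheses (opt : opt_kmeans_outliers z P Popt c0) (vor : voronoi Popt c0 f).

Lemma voronoi_Cost :
  Cost Popt (centers c0) = \sum_(q <- Popt) sqdist q (c0 (f q)).
Proof. by rewrite /Cost big_seq [RHS]big_seq; apply: eq_bigr => q /vor. Qed.

Lemma opt_center_mean p : p \in Popt -> c0 (f p) = star Popt f p.
Proof.
move=> pP; set j := f p; set X := cluster Popt f j.
apply/eqP; apply: contraT => not_mean.
have [uP sP szP le_opt] := opt.
pose c' i := if i == j then mean X else c0 i.
have pX : p \in X by rewrite mem_cluster eqxx.
have X0 : X != [::] by apply: contraTneq pX => ->.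
suff : Cost Popt (centers c') < Cost Popt (centers c0) by rewrite ltNge le_opt.
have off_j : \sum_(q <- Popt | f q != j) sqdist q (c' (f q)) =
             \sum_(q <- Popt | f q != j) sqdist q (c0 (f q)).
  by apply: eq_bigr => q /negbTE fqj; rewrite /c' fqj.
apply: le_lt_trans (Cost_le_assignment _ _ f) _.
rewrite voronoi_Cost (sum_cluster _ _ j (fun q i => sqdist q (c0 i))).
rewrite (sum_cluster _ _ j (fun q i => sqdist q (c' i))) off_j ltrD2r /c' eqxx.
exact: sum_sqdist_mean_lt.
Qed.

Lemma Ostar_sub_centers : {subset Ostar Popt f <= centers c0}.
Proof.
move=> q /mapP[j]; rewrite mem_filter mem_enum andbT => cl0 ->.
have [p] : exists p, p \in cluster Popt f j.
  by case: (cluster Popt f j) cl0 => [|p s] //; exists p; rewrite mem_head.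
rewrite mem_cluster => /andP[/eqP <- pP].
rewrite -[mean _]/(star Popt f p) -opt_center_mean //.
by apply/map_f; rewrite mem_enum.
Qed.

Lemma dist2_Ostar p :
  p \in Popt -> dist2 p (Ostar Popt f) = sqdist p (star Popt f p).
Proof.
move=> pP; apply/le_anti; rewrite dist2_le ?star_mem_Ostar //=.
have Popt0 : Popt != [::] by apply: contraTneq pP => ->.
rewrite -opt_center_mean // vor // dist2_subset ?Ostar_neq0 //.
exact: Ostar_sub_centers.
Qed.

Lemma Cost_star_le X H : {subset X <= Popt} ->
  Cost (map (star Popt f) X) H <= 2 * Cost X (Ostar Popt f) + 2 * Cost X H.
Proof.
move=> XP; rewrite /Cost big_map !mulr_sumr -big_split /=.
rewrite big_seq [leRHS]big_seq.
by apply: ler_sum => p /XP pP; rewrite dist2_Ostar // sqdistC dist2_le_sqdistD.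
Qed.

End OptimalSolution.

Theorem lemma6 (R : realType) (D k z k' : nat) (P : seq 'rV[R]_D)
    (Popt : seq 'rV[R]_D) (c0 : 'I_k -> 'rV[R]_D) (f : 'rV[R]_D -> 'I_k)
    (S H : seq 'rV[R]_D) (c : R) :
  (0 < k)%N -> uniq P -> (0 < z)%N -> (z < size P)%N ->
  opt_kmeans_outliers z P Popt c0 ->
  voronoi Popt c0 f ->
  {subset S <= P} ->
  (size [seq p <- S | p \notin Popt] <= k')%N ->
  uniq H -> size H = (k + k')%N ->
  1 <= c ->
  (forall H' : seq 'rV[R]_D, uniq H' -> size H' = (k + k')%N ->
       Cost S H <= c * Cost S H') ->
  let Sopt := [seq p <- S | p \in Popt] in
  Cost (map (star Popt f) Sopt) H <= (2 + 2 * c) * Cost Sopt (Ostar Popt f).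
Proof.
move=> _ _ _ zP opt vor _ outliers uH szH c1 H_approx /=.
set Sopt := [seq p <- S | p \in Popt].
set O := Ostar Popt f; set Sout := [seq p <- S | p \notin Popt].
have O0 : O != [::].
  case: opt => _ _ szP _.
  by rewrite Ostar_neq0 // -size_eq0 szP subn_eq0 -ltnNge.
have /(uniq_extend _ _ uH)[H' [uH' szH' OSout_H']] :
    (size (undup (O ++ Sout)) <= size H)%N.
  by rewrite szH (leq_trans (size_undup _)) // size_cat leq_add ?size_Ostar.
have cost_H' : Cost S H' <= Cost Sopt O.
  rewrite (Cost_filterC (mem Popt)) -/Sopt [X in _ + X]Cost_eq0 ?addr0.
    by apply: Cost_subset => // q qO; apply: OSout_H'; rewrite mem_cat qO.
  by move=> q qSout; apply: OSout_H'; rewrite mem_cat qSout orbT.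
have cost_H : Cost Sopt H <= c * Cost Sopt O.
  apply: le_trans (Cost_filter_le (mem Popt) S H) _.
  apply: le_trans (H_approx H' uH' _) _; first by rewrite szH' szH.
  by rewrite ler_wpM2l // (le_trans ler01).
have Sopt_Popt : {subset Sopt <= Popt}.
  by move=> p; rewrite mem_filter => /andP[].
by apply: le_trans (Cost_star_le opt vor _ _ Sopt_Popt) _; lra.
Qed.
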